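(* Let $\alpha,\delta\in\mathbb{F}\setminus\{\frac12\}$ with $\alpha\neq\delta$, and let $\mathbf{A}$ be the 5-dimensional LV algebra with natural basis $e_1,\dots,e_5$ in which $e_1e_k=\alpha e_1+(1-\alpha)e_k$ for $k\in\{2,3,5\}$, $e_1e_4=\delta e_1+(1-\delta)e_4$, and $e_ie_j=\frac12(e_i+e_j)$ for all $i,j\in\{2,3,4,5\}$. Then $\mathrm{Der}(\mathbf{A})=\{f\in L(\mathbf{A}) : f(e_1)=f(e_4)=0 \text{ and } \mathrm{Im}(f)\subseteq\langle e_2-e_3,\,e_2-e_5\rangle\}$.
   Context: Let $\mathbb{F}$ be a field of characteristic different from $2$. A Lotka–Volterra (LV) algebra of dimension $5$ over $\mathbb{F}$ is a commutative (not necessarily associative) $\mathbb{F}$-algebra $\mathbf{A}$ with a basis $e_1,\dots,e_5$ (the natural basis) such that $e_ie_j=\alpha_{ij}e_i+\alpha_{ji}e_j$ with $\alpha_{ij}\in\mathbb{F}$, $\alpha_{ii}=\frac12$ and $\alpha_{ij}+\alpha_{ji}=1$ for all $i,j$. A derivation is a linear map $D:\mathbf{A}\to\mathbf{A}$ with $D(uv)=D(u)v+uD(v)$ for all $u,v$; $\mathrm{Der}(\mathbf{A})$ is the set of derivations, $L(\mathbf{A})$ the set of linear maps $\mathbf{A}\to\mathbf{A}$, and $\langle x_1,\dots,x_k\rangle$ the linear span. *)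

From HB Require Import structures.
From mathcomp Require Import all_boot all_order all_algebra.
Set Implicit Arguments. Unset Strict Implicit. Unset Printing Implicit Defensive.
Import GRing.Theory.
Local Open Scope ring_scope.

(* Vectors of the 5-dimensional algebra are row vectors 'rV[F]_5 (coordinates
   in the natural basis).  Basis e_1..e_5 correspond to indices 0..4. *)
Definition ebasis (F : fieldType) (i : 'I_5) : 'rV[F]_5 := delta_mx 0 i.

Definition lvmul (F : fieldType) (a : 'I_5 -> 'I_5 -> F) (u v : 'rV[F]_5) : 'rV[F]_5 :=
  \sum_(i < 5) \sum_(j < 5)
     (u 0 i * v 0 j) *: (a i j *: ebasis F i + a j i *: ebasis F j).

(* The structure table of the algebra of the theorem (indices shifted by one):
   e_1 e_k = alpha e_1 + (1-alpha) e_k for k in {2,3,5}, e_1 e_4 = delta e_1 + (1-delta) e_4,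
   all other products (among e_2..e_5 and squares) have coefficients 1/2. *)
Definition table9 (F : fieldType) (alpha delta : F) (i j : 'I_5) : F :=
  let h := (2%:R : F)^-1 in
  if (i == 0 :> nat) && (j != 0 :> nat) then
    (if j == 3 :> nat then delta else alpha)
  else if (j == 0 :> nat) && (i != 0 :> nat) then
    (if i == 3 :> nat then 1 - delta else 1 - alpha)
  else h.

(* A linear map A -> A is represented by a matrix f acting on row vectors: x |-> x *m f.
   A derivation satisfies D(uv) = D(u) v + u D(v). *)
Definition is_derivation (F : fieldType) (a : 'I_5 -> 'I_5 -> F) (f : 'M[F]_5) : Prop :=
  forall u v : 'rV[F]_5,
    lvmul a u v *m f = lvmul a (u *m f) v + lvmul a u (v *m f).

Definition span9 (F : fieldType) : 'M[F]_(2, 5) :=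
  col_mx (ebasis F 1 - ebasis F 2) (ebasis F 1 - ebasis F 4).

(* In coordinates, the derivation identity on e_i e_j is one linear equation
   for each triple (i, j, k).  The instances (i,i,i), (i,i,k), (i,j,k) and
   (i,j,i) alone force f(e_1) = f(e_4) = 0 and make every f(e_i) have zero
   e_1- and e_4-coordinates and zero coordinate sum, which describes
   <e_2 - e_3, e_2 - e_5>.  Conversely, the rows a_i. of the structure
   table coincide for i in the block {e_2, e_3, e_5}, and every row is
   constant on that block, so a map supported on the block with zero row sums
   annihilates every term of the identity. *)

From HB Require Import structures.
From mathcomp Require Import all_boot all_order all_algebra.
From mathcomp Require Import ring.
Set Implicit Arguments.
Unset Strict Implicit.
Unset Printing Implicit Defensive.
Import GRing.Theory.
Local Open Scope ring_scope.

Lemma eq0_of_sub_eq {F : fieldType} {x l r : F} : l = r -> x = l - r -> x = 0.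
Proof. by move=> -> ->; rewrite subrr. Qed.

Section LVProduct.
Variables (F : fieldType) (a : 'I_5 -> 'I_5 -> F).
Local Notation e := (ebasis F).

Lemma ebasisE i j : e i 0 j = (i == j)%:R.
Proof. by rewrite mxE eqxx eq_sym. Qed.

Lemma mul_ebasis_mx (f : 'M[F]_5) i : e i *m f = row i f.
Proof. by rewrite -rowE. Qed.

Lemma sum_ebasis (u : 'rV[F]_5) : u = \sum_i u 0 i *: e i.
Proof. exact: row_sum_delta. Qed.

Lemma lvmulE u v k :
  lvmul a u v 0 k = \sum_j a k j * (u 0 k * v 0 j + u 0 j * v 0 k).
Proof.
rewrite /lvmul summxE.
under eq_bigr do rewrite summxE.
under eq_bigr do under eq_bigr do rewrite !mxE /= mulrDr.
under eq_bigr do rewrite big_split /=.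
rewrite big_split /= [X in _ + X]exchange_big /=.
have off_k (G H : 'I_5 -> 'I_5 -> F) :
  \sum_(i < 5 | i != k) \sum_j G i j * (H i j * (k == i)%:R) = 0.
  by apply: big1 => i ik; apply: big1 => j _; rewrite eq_sym (negbTE ik) !mulr0.
rewrite (bigD1 k) //= [X in _ + X + _]off_k addr0.
rewrite [X in _ + X](bigD1 k) //= [X in _ + (_ + X)]off_k addr0.
rewrite -big_split /=; apply: eq_bigr => j _.
by rewrite eqxx !mulr1 mulrDr; congr (_ + _); rewrite mulrC.
Qed.

Lemma lvmulC u v : lvmul a u v = lvmul a v u.
Proof.
apply/rowP => k; rewrite !lvmulE; apply: eq_bigr => j _.
by rewrite addrC [u 0 k * _]mulrC [u 0 j * _]mulrC.
Qed.

Lemma lvmul_suml (c : 'I_5 -> F) (x : 'I_5 -> 'rV[F]_5) v :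
  lvmul a (\sum_i c i *: x i) v = \sum_i c i *: lvmul a (x i) v.
Proof.
apply/rowP => k; rewrite lvmulE !summxE.
under [RHS]eq_bigr do rewrite mxE lvmulE mulr_sumr.
rewrite [RHS]exchange_big /=; apply: eq_bigr => j _.
rewrite summxE !mulr_suml -big_split mulr_sumr /=.
by apply: eq_bigr => i _; rewrite !mxE; ring.
Qed.

Lemma lvmul_sumr (c : 'I_5 -> F) (x : 'I_5 -> 'rV[F]_5) u :
  lvmul a u (\sum_i c i *: x i) = \sum_i c i *: lvmul a u (x i).
Proof. by rewrite lvmulC lvmul_suml; under eq_bigr do rewrite lvmulC. Qed.

Lemma lvmul_ebasisr u j k :
  lvmul a u (e j) 0 k = a k j * u 0 k + (k == j)%:R * \sum_l a k l * u 0 l.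
Proof.
rewrite lvmulE; under eq_bigr do rewrite !ebasisE mulrDr.
rewrite big_split /= (bigD1 j) //= eqxx mulr1 big1 ?addr0 => [|l /negbTE jl]; last first.
  by rewrite eq_sym jl !mulr0.
by rewrite mulr_sumr; congr (_ + _); apply: eq_bigr => l _; rewrite eq_sym; ring.
Qed.

Lemma lvmul_ebasis i j : lvmul a (e i) (e j) = a i j *: e i + a j i *: e j.
Proof.
apply/rowP => k; rewrite lvmul_ebasisr ebasisE.
rewrite (bigD1 i) //= ebasisE eqxx mulr1 big1 ?addr0 => [|l /negbTE il]; last first.
  by rewrite ebasisE eq_sym il mulr0.
rewrite !mxE !eqxx /= !(eq_sym k).
by do 2 case: eqP => [->|_]; rewrite /=; ring.
Qed.

Section Derivations.
Variable f : 'M[F]_5.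

Lemma lvmul_row_ebasisE m j k :
  lvmul a (row m f) (e j) 0 k = a k j * f m k + (k == j)%:R * \sum_l a k l * f m l.
Proof. by rewrite lvmul_ebasisr mxE; under eq_bigr do rewrite mxE. Qed.

Lemma derivation_ebasisP i j :
  lvmul a (e i) (e j) *m f = lvmul a (row i f) (e j) + lvmul a (e i) (row j f) <->
  forall k, a i j * f i k + a j i * f j k =
    (a k j * f i k + (k == j)%:R * \sum_l a k l * f i l) +
    (a k i * f j k + (k == i)%:R * \sum_l a k l * f j l).
Proof.
rewrite lvmul_ebasis mulmxDl -!scalemxAl !mul_ebasis_mx (lvmulC (e i)).
split => [/rowP + k | E]; last apply/rowP => k.
  by move/(_ k); rewrite !mxE !lvmul_row_ebasisE.
by rewrite !mxE !lvmul_row_ebasisE E.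
Qed.

Lemma is_derivation_ebasis :
  is_derivation a f <->
  forall i j, lvmul a (e i) (e j) *m f = lvmul a (row i f) (e j) + lvmul a (e i) (row j f).
Proof.
split=> [Df i j | Df u v]; first by rewrite Df !mul_ebasis_mx.
have mul_sum (w : 'rV[F]_5) : w *m f = \sum_i w 0 i *: row i f.
  by rewrite {1}(sum_ebasis w) mulmx_suml; under eq_bigr do rewrite -scalemxAl mul_ebasis_mx.
rewrite [u *m f]mul_sum [v *m f]mul_sum {1 3}(sum_ebasis u) {1 2}(sum_ebasis v).
rewrite !lvmul_suml mulmx_suml -big_split /=.
apply: eq_bigr => i _; rewrite !lvmul_sumr -scalemxAl mulmx_suml -scalerDr -big_split /=.
by congr (_ *: _); apply: eq_bigr => j _; rewrite -scalemxAl Df scalerDr.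
Qed.

Lemma is_derivationP :
  is_derivation a f <->
  forall i j k, a i j * f i k + a j i * f j k =
    (a k j * f i k + (k == j)%:R * \sum_l a k l * f i l) +
    (a k i * f j k + (k == i)%:R * \sum_l a k l * f j l).
Proof.
rewrite is_derivation_ebasis.
by split=> Df i j; apply/derivation_ebasisP.
Qed.

Lemma block_is_derivation (S : pred 'I_5) :
  (forall i k, ~~ (S i && S k) -> f i k = 0) ->
  (forall i, \sum_k f i k = 0) ->
  {in S &, forall i i', a i =1 a i'} ->
  (forall k, {in S &, forall l l', a k l = a k l'}) ->
  is_derivation a f.
Proof.
move=> f_out row_sum0 a_row a_col.
have wsum0 k m : \sum_l a k l * f m l = 0.
  have [s Ss|S0] := pickP S; last first.
    by apply: big1 => l _; rewrite f_out ?S0 ?mulr0.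
  rewrite (eq_bigr (fun l => a k s * f m l)) => [|l _].
    by rewrite -mulr_sumr row_sum0 mulr0.
  have [Sl|/negbTE Sl] := boolP (S l); first by rewrite (a_col k l s Sl Ss).
  by rewrite f_out ?Sl ?andbF ?mulr0.
have shift i j k : a i j * f i k = a k j * f i k.
  have [/andP[Si Sk]|nS] := boolP (S i && S k); first by rewrite (a_row i k).
  by rewrite f_out // !mulr0.
by apply/is_derivationP => i j k; rewrite !wsum0 !mulr0 !addr0 !(shift _ _ k).
Qed.

Hypotheses (h2 : 2%:R != 0 :> F) (Df : is_derivation a f).

Lemma derivation_weighted_row_sum i : \sum_l a i l * f i l = 0.
Proof.
have E := is_derivationP.1 Df i i i; rewrite eqxx mul1r in E.
have /eqP : 2%:R * \sum_l a i l * f i l = 0 by apply: (eq0_of_sub_eq (esym E)); ring.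
by rewrite mulf_eq0 (negbTE h2) => /eqP.
Qed.

Lemma derivation_offdiag_eq0 i k : k != i -> a k i != a i i -> f i k = 0.
Proof.
move=> /negbTE ki aki; have E := is_derivationP.1 Df i i k; rewrite ki mul0r addr0 in E.
have /eqP : (2%:R * (a i i - a k i)) * f i k = 0 by apply: (eq0_of_sub_eq E); ring.
by rewrite !mulf_eq0 (negbTE h2) subr_eq0 eq_sym (negbTE aki) => /eqP.
Qed.

Lemma derivation_cross_eq0 i j k : k != i -> k != j ->
  (a i j - a k j) * f i k + (a j i - a k i) * f j k = 0.
Proof.
move=> /negbTE ki /negbTE kj; have E := is_derivationP.1 Df i j k.
by rewrite ki kj !mul0r !addr0 in E; apply: (eq0_of_sub_eq E); ring.
Qed.

Lemma derivation_col_sum i j : i != j -> (a j i - a i i) * f j i = \sum_l a i l * f j l.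
Proof.
move=> /negbTE ij; have E := is_derivationP.1 Df i j i.
rewrite ij eqxx mul0r mul1r addr0 in E; apply/eqP; rewrite -subr_eq0; apply/eqP.
by apply: (eq0_of_sub_eq E); ring.
Qed.

End Derivations.
End LVProduct.

Local Notation o n := (@Ordinal 5 n%N isT).

Lemma forall_ord5 (P : 'I_5 -> Prop) :
  P (o 0) -> P (o 1) -> P (o 2) -> P (o 3) -> P (o 4) -> forall k, P k.
Proof.
move=> P0 P1 P2 P3 P4 [[|[|[|[|[|n]]]]] lt_n5] //;
  by rewrite (bool_irrelevance lt_n5 isT).
Qed.

Lemma sum_ord5 (V : nmodType) (G : 'I_5 -> V) :
  \sum_l G l = G (o 0) + G (o 1) + G (o 2) + G (o 3) + G (o 4).
Proof.
rewrite !big_ord_recl big_ord0 addr0 !addrA.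
by congr (G _ + G _ + G _ + G _ + G _); apply: val_inj.
Qed.

Section Span9.
Variable F : fieldType.

Local Notation e := (ebasis F).

Lemma mul_span9 (c : 'rV[F]_2) :
  c *m span9 F = c 0 0 *: (e 1 - e 2) + c 0 1 *: (e 1 - e 4).
Proof.
rewrite /span9 -[c in LHS](@hsubmxK F 1 1 1 c) (mul_row_col (@lsubmx _ 1 1 1 c)).
rewrite (mx11_scalar (lsubmx _)) (mx11_scalar (rsubmx _)).
by rewrite !mul_scalar_mx !mxE; congr (c 0 _ *: _ + c 0 _ *: _); apply: val_inj.
Qed.

Lemma sub_span9P (x : 'rV[F]_5) :
  (x <= span9 F)%MS <-> [/\ x 0 (o 0) = 0, x 0 (o 3) = 0 & \sum_k x 0 k = 0].
Proof.
split=> [/submxP[c ->] | [x0 x3]].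
  by rewrite mul_span9 sum_ord5 !mxE /=; split; ring.
rewrite sum_ord5 x0 x3 add0r addr0 => xsum.
apply/submxP; exists (\row_j (if j == 0 then - x 0 (o 2) else - x 0 (o 4))).
rewrite mul_span9; apply/rowP; elim/forall_ord5; rewrite !mxE /= ?x0 ?x3; try ring.
by apply/eqP; rewrite -subr_eq0; apply/eqP/(eq0_of_sub_eq xsum); ring.
Qed.

End Span9.

Section Table9Derivations.
Variables (F : fieldType) (alpha delta : F).
Hypotheses (h2 : 2%:R != 0 :> F) (halpha : alpha != 2^-1) (hdelta : delta != 2^-1)
  (had : alpha != delta).
Local Notation a := (table9 alpha delta).

Lemma onem_neq_half (x : F) : x != 2^-1 -> 1 - x != 2^-1.
Proof.
apply: contra => /eqP e; apply/eqP.
have -> : x = 1 - (1 - x) by ring.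
by rewrite e; field.
Qed.

Variable f : 'M[F]_5.
Hypothesis Df : is_derivation a f.

Lemma derivation9_row0 k : f (o 0) k = 0.
Proof.
have off l : l != o 0 -> f (o 0) l = 0.
  move=> l0; apply: (derivation_offdiag_eq0 h2 Df l0).
  by elim/forall_ord5: l l0 => // _; rewrite /table9 /= onem_neq_half.
have := derivation_weighted_row_sum h2 Df (o 0).
rewrite sum_ord5 /table9 /= (off (o 1)) // (off (o 2)) // (off (o 3)) // (off (o 4)) //.
rewrite !mulr0 !addr0 => /eqP.
rewrite mulf_eq0 invr_eq0 (negbTE h2) => /eqP f00.
by elim/forall_ord5: k => //; apply: off.
Qed.

Lemma derivation9_col0 i : f i (o 0) = 0.
Proof.
have [->|i0] := eqVneq i (o 0); first exact: derivation9_row0.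
apply: (derivation_offdiag_eq0 h2 Df); first by rewrite eq_sym.
by elim/forall_ord5: i i0.
Qed.

Lemma derivation9_row_sum i : \sum_k f i k = 0.
Proof.
have [->|i0] := eqVneq i (o 0); first by apply: big1 => k _; rewrite derivation9_row0.
have := derivation_weighted_row_sum h2 Df i.
rewrite !sum_ord5 derivation9_col0 !mulr0 !add0r.
elim/forall_ord5: i i0 => // _; rewrite /table9 /= -!mulrDr => /eqP;
  by rewrite mulf_eq0 invr_eq0 (negbTE h2) => /eqP.
Qed.

Lemma derivation9_row3 k : f (o 3) k = 0.
Proof.
have off l : l != o 0 -> l != o 3 -> f (o 3) l = 0.
  move=> l0 l3; have := derivation_cross_eq0 Df l0 l3.
  rewrite derivation9_row0 mulr0 add0r => /eqP; rewrite mulf_eq0 => /orP[|/eqP//].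
  elim/forall_ord5: l l0 l3 => // _ _; rewrite /table9 /= subr_eq0;
    by rewrite (inj_eq (addrI _)) eqr_opp eq_sym (negbTE had).
have := derivation9_row_sum (o 3); rewrite sum_ord5 derivation9_col0.
rewrite (off (o 1)) // (off (o 2)) // (off (o 4)) // !add0r addr0 => f33.
by elim/forall_ord5: k => //; [apply: derivation9_col0 | apply: off ..].
Qed.

Lemma derivation9_col3 i : f i (o 3) = 0.
Proof.
have [->|i0] := eqVneq i (o 0); first exact: derivation9_row0.
have := derivation9_row_sum i; rewrite sum_ord5 derivation9_col0 add0r => row_sum.
have fi1 : f i (o 1) = - (f i (o 2) + f i (o 3) + f i (o 4)).
  by apply/eqP; rewrite -subr_eq0; apply/eqP/(eq0_of_sub_eq row_sum); ring.
have := derivation_col_sum Df (_ : o 0 != i); rewrite eq_sym => /(_ i0).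
rewrite derivation9_col0 mulr0 sum_ord5 derivation9_col0 mulr0 add0r fi1 /table9 /= => E.
have coef : delta - alpha != 0 by rewrite subr_eq0 eq_sym.
by apply: (mulfI coef); rewrite mulr0; apply: (eq0_of_sub_eq (esym E)); ring.
Qed.

Lemma derivation9_shape : [/\ row (o 0) f = 0, row (o 3) f = 0 & (f <= span9 F)%MS].
Proof.
split; [apply/rowP => k; rewrite !mxE; exact: derivation9_row0 |
        apply/rowP => k; rewrite !mxE; exact: derivation9_row3 | ].
apply/row_subP => i; apply/sub_span9P; rewrite !mxE.
split; [exact: derivation9_col0 | exact: derivation9_col3 | ].
by under eq_bigr do rewrite mxE; exact: derivation9_row_sum.
Qed.

End Table9Derivations.

Lemma derivation9_of_shape (F : fieldType) (alpha delta : F) (f : 'M[F]_5) :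
  row (o 0) f = 0 -> row (o 3) f = 0 -> (f <= span9 F)%MS ->
  is_derivation (table9 alpha delta) f.
Proof.
move=> /rowP f0 /rowP f3 /row_subP fS.
have f_col i : [/\ f i (o 0) = 0, f i (o 3) = 0 & \sum_k f i k = 0].
  by have /sub_span9P := fS i; rewrite !mxE; under eq_bigr do rewrite mxE.
apply: (block_is_derivation (S := [pred i | (i != o 0) && (i != o 3)])).
- move=> i k /nandP[/nandP[]|/nandP[]] /negPn/eqP->.
  + by have := f0 k; rewrite !mxE.
  + by have := f3 k; rewrite !mxE.
  + by have [] := f_col i.
  + by have [] := f_col i.
- by move=> i; have [] := f_col i.
- move=> i i'; rewrite !inE.
  by elim/forall_ord5: i => //; elim/forall_ord5: i' => // _ _ _ _ j; elim/forall_ord5: j.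
- move=> k l l'; rewrite !inE.
  by elim/forall_ord5: l => //; elim/forall_ord5: l' => // _ _ _ _; elim/forall_ord5: k.
Qed.

Theorem mainTheorem9 (F : fieldType) (alpha delta : F)
  (hchar : (2%:R : F) != 0)
  (halpha : alpha != (2%:R : F)^-1) (hdelta : delta != (2%:R : F)^-1)
  (had : alpha != delta) (f : 'M[F]_5) :
  is_derivation (table9 alpha delta) f <->
  [/\ ebasis F 0 *m f = 0, ebasis F 3 *m f = 0 & (f <= span9 F)%MS].
Proof.
have [-> ->] : ebasis F 0 = ebasis F (o 0) /\ ebasis F 3 = ebasis F (o 3).
  by split; congr ebasis; apply: val_inj.
rewrite !mul_ebasis_mx; split=> [Df | [f0 f3 fS]].
  exact: (derivation9_shape hchar halpha hdelta had Df).
exact: derivation9_of_shape.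
Qed.
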